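(* The geometric thickness of the complete bipartite graph $K_{6,6}$ is $\overline{\theta}(K_{6,6}) = 2$.
   Context: The geometric thickness $\overline{\theta}(G)$ of a graph $G$ is the smallest integer $k$ such that there is an injective placement of the vertices of $G$ at points of the plane, with each edge drawn as the straight line segment between the points of its endpoints and containing no other vertex point, together with an assignment of each edge to one of $k$ layers, such that no two edges assigned to the same layer cross (i.e., two edges in the same layer meet at most in a common endpoint). *)

From Stdlib Require Import Reals Lia.
Open Scope R_scope.

Definition point := (R * R)%type.

Definition on_seg (p a b : point) : Prop :=
  exists t : R, 0 <= t <= 1 /\
    fst p = fst a + t * (fst b - fst a) /\
    snd p = snd a + t * (snd b - snd a).

Record graph := Graph {
  nverts : nat;
  adj : nat -> nat -> Prop;
  adj_sym : forall u v, adj u v -> adj v u;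
  adj_irr : forall u, ~ adj u u;
  adj_range : forall u v, adj u v -> (u < nverts)%nat /\ (v < nverts)%nat
}.

Definition same_edge (u v x y : nat) : Prop :=
  (u = x /\ v = y) \/ (u = y /\ v = x).

Definition geom_k_layerable (G : graph) (k : nat) : Prop :=
  exists (pos : nat -> point) (layer : nat -> nat -> nat),
    (forall u v, (u < nverts G)%nat -> (v < nverts G)%nat -> pos u = pos v -> u = v) /\
    (forall u v w, adj G u v -> (w < nverts G)%nat -> w <> u -> w <> v ->
        ~ on_seg (pos w) (pos u) (pos v)) /\
    (forall u v, adj G u v -> (layer u v < k)%nat /\ layer u v = layer v u) /\
    (forall u v x y, adj G u v -> adj G x y -> ~ same_edge u v x y ->
        layer u v = layer x y ->
        forall p, on_seg p (pos u) (pos v) -> on_seg p (pos x) (pos y) ->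
          exists w, (w = u \/ w = v) /\ (w = x \/ w = y) /\ p = pos w).

Definition geometric_thickness_is (G : graph) (k : nat) : Prop :=
  geom_k_layerable G k /\ forall k', geom_k_layerable G k' -> (k <= k')%nat.

Definition Kbip_adj (m n : nat) (u v : nat) : Prop :=
  ((u < m)%nat /\ (m <= v < m + n)%nat) \/ ((v < m)%nat /\ (m <= u < m + n)%nat).

Lemma Kbip_sym m n u v : Kbip_adj m n u v -> Kbip_adj m n v u.
Proof. unfold Kbip_adj; tauto. Qed.

Lemma Kbip_irr m n u : ~ Kbip_adj m n u u.
Proof. unfold Kbip_adj; lia. Qed.

Lemma Kbip_range m n u v : Kbip_adj m n u v -> (u < m + n)%nat /\ (v < m + n)%nat.
Proof. unfold Kbip_adj; lia. Qed.

Definition K_bip (m n : nat) : graph :=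
  Graph (m + n) (Kbip_adj m n) (@Kbip_sym m n) (@Kbip_irr m n) (@Kbip_range m n).

(* Upper bound: an explicit drawing with integer coordinates, checked by exact computation
   of orientation signs; in each layer, of any two edges without a common endpoint, one lies
   strictly on one side of the line through the other.

   Lower bound: one layer would be a plane straight-line drawing of K_{6,6}. Fix left vertices
   a1, a2, a3. A right vertex on the line a1 a2 must lie on the segment a1 a2, and two of them
   would put one on an edge, so three right vertices b1, b2, b3 lie strictly on one side of the
   line. Since the edges at a1 and at a2 do not cross, the angular orders of the b's seen from
   a1 and from a2 are opposite; taking b2 in the middle, wherever a3 lies, one of its edges to
   b1, b2, b3 must leave a triangle a1 a2 bj through its side a1 bj or a2 bj, a crossing. *)

From Stdlib Require Import Reals Lra Lia Psatz ZArith List Bool FinFun.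
Import ListNotations.
Open Scope R_scope.

(** * Orientation and segments *)

(* Twice the signed area of p q r: positive iff p, q, r turn counterclockwise. *)
Definition orient (p q r : point) : R :=
  (fst q - fst p) * (snd r - snd p) - (snd q - snd p) * (fst r - fst p).

Definition lerp (p q : point) (t : R) : point :=
  (fst p + t * (fst q - fst p), snd p + t * (snd q - snd p)).

Lemma orient_cycle p q r : orient p q r = orient q r p.
Proof. unfold orient; ring. Qed.

Lemma orient_swap12 p q r : orient p q r = - orient q p r.
Proof. unfold orient; ring. Qed.

Lemma orient_swap23 p q r : orient p q r = - orient p r q.
Proof. unfold orient; ring. Qed.

Lemma orient_lerp p q x y t :
  orient p q (lerp x y t) = (1 - t) * orient p q x + t * orient p q y.
Proof. unfold orient, lerp; simpl; ring. Qed.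

Lemma orient_distinct p q r : orient p q r <> 0 -> p <> q /\ q <> r /\ p <> r.
Proof. intros H; repeat split; intros E; subst; apply H; unfold orient; ring. Qed.

Lemma convex_comb_pos a b t : 0 < a -> 0 < b -> 0 <= t <= 1 -> 0 < (1 - t) * a + t * b.
Proof. intros Ha Hb Ht; destruct (Rle_or_lt t (1/2)); nra. Qed.

Lemma ratio_01 a b : a * b < 0 -> 0 <= a / (a - b) <= 1.
Proof.
  intros H; assert (Hab : a - b <> 0) by nra.
  assert (E : a / (a - b) * (a - b) = a) by (field; exact Hab).
  destruct (Rlt_or_le a 0); [assert (0 < b) by nra | assert (b < 0) by nra]; split; nra.
Qed.

Lemma affine_root a b : 0 <= a -> b < 0 -> exists t, 0 <= t <= 1 /\ (1 - t) * a + t * b = 0.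
Proof.
  intros Ha Hb; exists (a / (a - b)).
  assert (E : a / (a - b) * (a - b) = a) by (field; lra).
  split; [split|]; nra.
Qed.

Lemma affine_first_exit a b c d : 0 <= a -> b < 0 -> 0 <= c ->
  exists t, 0 <= t <= 1 /\ (1 - t) * a + t * b = 0 /\ 0 <= (1 - t) * c + t * d
         \/ 0 <= t <= 1 /\ 0 <= (1 - t) * a + t * b /\ (1 - t) * c + t * d = 0.
Proof.
  intros Ha Hb Hc; destruct (affine_root a b Ha Hb) as [t1 [Ht1 E1]].
  destruct (Rle_or_lt 0 ((1 - t1) * c + t1 * d)) as [G1|G1].
  - exists t1; left; auto.
  - destruct (affine_root c ((1 - t1) * c + t1 * d) Hc G1) as [s [Hs E2]].
    exists (s * t1); right; split; [nra|split].
    + replace ((1 - s * t1) * a + s * t1 * b) with ((1 - s) * a + s * ((1 - t1) * a + t1 * b))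
        by ring; nra.
    + rewrite <- E2; ring.
Qed.

Lemma on_seg_lerp p q t : 0 <= t <= 1 -> on_seg (lerp p q t) p q.
Proof. intros Ht; exists t; simpl; auto. Qed.

Lemma on_segP z p q : on_seg z p q -> exists t, 0 <= t <= 1 /\ z = lerp p q t.
Proof.
  intros [t [Ht [E1 E2]]]; exists t; split; [exact Ht|].
  destruct z; unfold lerp; simpl in *; congruence.
Qed.

Lemma on_seg_left p q : on_seg p p q.
Proof. exists 0; split; [lra|split; ring]. Qed.

Lemma on_seg_sym z p q : on_seg z p q -> on_seg z q p.
Proof.
  intros [t [Ht [E1 E2]]]; exists (1 - t); split; [lra|].
  rewrite E1, E2; split; ring.
Qed.

Lemma on_seg_orient z p q : on_seg z p q -> orient p q z = 0.
Proof. intros H; destruct (on_segP _ _ _ H) as [t [_ ->]]; unfold orient, lerp; simpl; ring. Qed.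

Lemma on_seg_trans w x y z : on_seg w x y -> on_seg z w y -> on_seg z x y.
Proof.
  intros Hw Hz; destruct (on_segP _ _ _ Hw) as [s [Hs ->]].
  destruct (on_segP _ _ _ Hz) as [t [Ht ->]].
  exists (s + t * (1 - s)); split; [nra|]; unfold lerp; simpl; split; ring.
Qed.

Lemma on_seg_lerp_le p q s t : 0 <= s <= t -> on_seg (lerp p q s) p (lerp p q t).
Proof.
  intros Hst; destruct (Req_dec t 0) as [Z|Z].
  - exists 0; unfold lerp; simpl; replace s with 0 by lra; split; [lra|split; ring].
  - exists (s / t); unfold lerp; simpl; split; [|split; field; lra].
    split; [apply Rle_mult_inv_pos; lra|].
    apply Rmult_le_reg_r with t; [lra|]; field_simplify; lra.
Qed.

Lemma collinear_lerp p q r : p <> q -> orient p q r = 0 -> exists t, r = lerp p q t.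
Proof.
  destruct p as [p1 p2], q as [q1 q2], r as [r1 r2]; unfold orient, lerp; simpl.
  intros Hpq H; destruct (Req_dec q1 p1) as [E1|N1].
  - assert (N2 : q2 - p2 <> 0) by (intro; apply Hpq; f_equal; lra).
    assert (E : (q2 - p2) * (r1 - p1) = 0) by (subst; lra).
    apply Rmult_integral in E; destruct E as [E|E]; [contradiction|].
    exists ((r2 - p2) / (q2 - p2)); f_equal; [subst; lra | field; auto].
  - exists ((r1 - p1) / (q1 - p1)); f_equal; [field; lra|].
    apply Rmult_eq_reg_l with (q1 - p1); [|lra]; field_simplify; [lra|lra].
Qed.

Lemma collinear_between p q r : p <> q -> orient p q r = 0 ->
  on_seg r p q \/ on_seg p r q \/ on_seg q p r.
Proof.
  intros Hpq H; destruct (collinear_lerp p q r Hpq H) as [t ->].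
  destruct (Rlt_or_le t 0) as [T0|T0]; [|destruct (Rle_or_lt t 1) as [T1|T1]].
  - right; left; exists (- t / (1 - t)); unfold lerp; simpl.
    split; [split; [apply Rle_mult_inv_pos; lra|]|split; field; lra].
    apply Rmult_le_reg_r with (1 - t); [lra|]; field_simplify; lra.
  - left; apply on_seg_lerp; lra.
  - right; right; exists (/ t); unfold lerp; simpl.
    split; [split; [left; apply Rinv_0_lt_compat; lra|]|split; field; lra].
    rewrite <- Rinv_1; apply Rinv_le_contravar; lra.
Qed.

Lemma same_side_segments_disjoint p q r s z :
  0 < orient p q r * orient p q s -> on_seg z p q -> on_seg z r s -> False.
Proof.
  intros H Hpq Hrs; apply on_seg_orient in Hpq.
  destruct (on_segP _ _ _ Hrs) as [t [Ht ->]]; rewrite orient_lerp in Hpq.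
  assert (Hr : orient p q r <> 0) by (intro E; rewrite E in H; lra).
  destruct (Rlt_or_le 0 (orient p q r)).
  - assert (0 < orient p q s) by nra.
    pose proof (convex_comb_pos (orient p q r) (orient p q s) t); lra.
  - assert (orient p q r < 0) by lra; assert (orient p q s < 0) by nra.
    pose proof (convex_comb_pos (- orient p q r) (- orient p q s) t); lra.
Qed.

Lemma on_seg_common_endpoint p q r z :
  orient p q r <> 0 -> on_seg z p q -> on_seg z p r -> z = p.
Proof.
  intros H Hq Hr; apply on_seg_orient in Hq.
  destruct (on_segP _ _ _ Hr) as [t [_ ->]]; rewrite orient_lerp in Hq.
  replace (orient p q p) with 0 in Hq by (unfold orient; ring).
  rewrite Rmult_0_r, Rplus_0_l in Hq.
  apply Rmult_integral in Hq; destruct Hq as [Ht|]; [|contradiction].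
  subst t; destruct p; unfold lerp; simpl; f_equal; ring.
Qed.

Lemma segments_cross p q r s :
  orient p q r * orient p q s < 0 -> orient r s p * orient r s q < 0 ->
  exists z, on_seg z p q /\ on_seg z r s.
Proof.
  intros H1 H2.
  assert (N1 : orient p q r - orient p q s <> 0) by nra.
  assert (N2 : orient r s p - orient r s q <> 0) by nra.
  exists (lerp p q (orient r s p / (orient r s p - orient r s q))); split.
  - apply on_seg_lerp, ratio_01, H2.
  - exists (orient p q r / (orient p q r - orient p q s)); split; [apply ratio_01, H1|].
    destruct p, q, r, s; unfold orient, lerp in *; simpl in *; split; field; auto.
Qed.

(* The closed triangle p q c, provided it is counterclockwise. *)
Definition in_triangle (p q c z : point) : Prop :=
  0 <= orient p q z /\ 0 <= orient q c z /\ 0 <= orient c p z.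

Lemma in_triangle_cycle p q c z : in_triangle p q c z -> in_triangle q c p z.
Proof. unfold in_triangle; tauto. Qed.

Lemma in_triangle_on_side p q c z : 0 < orient p q c -> in_triangle p q c z ->
  orient q c z = 0 -> on_seg z q c.
Proof.
  intros D [Hpq [_ Hcp]] Hz.
  assert (Hqc : q <> c) by (intros ->; unfold orient in D; lra).
  destruct (collinear_lerp q c z Hqc Hz) as [t ->].
  rewrite orient_lerp in Hpq, Hcp.
  replace (orient p q q) with 0 in Hpq by (unfold orient; ring).
  replace (orient c p c) with 0 in Hcp by (unfold orient; ring).
  rewrite (orient_cycle c p q) in Hcp.
  apply on_seg_lerp; split; nra.
Qed.

Lemma triangle_exit p q c x y : 0 < orient p q c -> in_triangle p q c x ->
  0 <= orient p q y -> orient q c y < 0 \/ orient c p y < 0 ->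
  exists z, on_seg z x y /\ (on_seg z q c \/ on_seg z c p).
Proof.
  intros D [Hpq [Hqc Hcp]] Hy Hout.
  assert (Exit : exists t, 0 <= t <= 1 /\ 0 <= orient q c (lerp x y t) /\
            0 <= orient c p (lerp x y t) /\
            (orient q c (lerp x y t) = 0 \/ orient c p (lerp x y t) = 0)).
  { setoid_rewrite orient_lerp; destruct Hout as [Hout|Hout].
    - destruct (affine_first_exit _ _ _ (orient c p y) Hqc Hout Hcp) as [t Ht].
      exists t; intuition lra.
    - destruct (affine_first_exit _ _ _ (orient q c y) Hcp Hout Hqc) as [t Ht].
      exists t; intuition lra. }
  destruct Exit as [t [Ht [Gqc [Gcp E]]]].
  assert (Hz : in_triangle p q c (lerp x y t)).
  { split; [rewrite orient_lerp; nra | auto]. }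
  exists (lerp x y t); split; [apply on_seg_lerp, Ht|]; destruct E as [E|E].
  - left; apply in_triangle_on_side with p; auto.
  - right; apply in_triangle_on_side with q; [rewrite <- orient_cycle; exact D| |exact E].
    apply in_triangle_cycle, Hz.
Qed.

(** * Layered drawings in general position *)

Lemma geom_layerable_of_separation (G : graph) (k : nat) (pos : nat -> point)
    (layer : nat -> nat -> nat) :
  (forall u v, (u < nverts G)%nat -> (v < nverts G)%nat -> pos u = pos v -> u = v) ->
  (forall u v w, (u < nverts G)%nat -> (v < nverts G)%nat -> (w < nverts G)%nat ->
     u <> v -> u <> w -> v <> w -> orient (pos u) (pos v) (pos w) <> 0) ->
  (forall u v, adj G u v -> (layer u v < k)%nat /\ layer u v = layer v u) ->
  (forall u v x y, adj G u v -> adj G x y -> u <> x -> u <> y -> v <> x -> v <> y ->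
     layer u v = layer x y ->
     0 < orient (pos u) (pos v) (pos x) * orient (pos u) (pos v) (pos y) \/
     0 < orient (pos x) (pos y) (pos u) * orient (pos x) (pos y) (pos v)) ->
  geom_k_layerable G k.
Proof.
  intros Inj Gen Layers Sep; exists pos, layer.
  split; [exact Inj | split; [| split; [exact Layers |]]].
  - intros u v w E Hw Nu Nv S; destruct (adj_range G u v E).
    apply (Gen u v w); auto; [intros ->; exact (adj_irr G v E) | apply on_seg_orient, S].
  - intros u v x y E E' Ns L p S S'.
    destruct (adj_range G u v E), (adj_range G x y E').
    assert (Nuv : u <> v) by (intros ->; exact (adj_irr G v E)).
    assert (Nxy : x <> y) by (intros ->; exact (adj_irr G y E')).
    assert (Shared : forall a b c, (a < nverts G)%nat -> (b < nverts G)%nat ->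
              (c < nverts G)%nat -> a <> b -> a <> c -> b <> c ->
              on_seg p (pos a) (pos b) -> on_seg p (pos a) (pos c) -> p = pos a)
      by (intros; apply on_seg_common_endpoint with (pos b) (pos c); auto).
    destruct (Nat.eq_dec u x) as [<-|Nux].
    { exists u; repeat split; auto; apply Shared with v y; auto.
      intros <-; apply Ns; left; auto. }
    destruct (Nat.eq_dec u y) as [<-|Nuy].
    { exists u; repeat split; auto; apply Shared with v x; auto using on_seg_sym.
      intros <-; apply Ns; right; auto. }
    destruct (Nat.eq_dec v x) as [<-|Nvx].
    { exists v; repeat split; auto; apply Shared with u y; auto using on_seg_sym. }
    destruct (Nat.eq_dec v y) as [<-|Nvy].
    { exists v; repeat split; auto; apply Shared with u x; auto using on_seg_sym. }
    exfalso; destruct (Sep u v x y) as [Side|Side]; auto.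
    + exact (same_side_segments_disjoint _ _ _ _ p Side S S').
    + exact (same_side_segments_disjoint _ _ _ _ p Side S' S).
Qed.

Definition Zpoint (x y : nat -> Z) (v : nat) : point := (IZR (x v), IZR (y v)).

Definition orientZ (x y : nat -> Z) (u v w : nat) : Z :=
  ((x v - x u) * (y w - y u) - (y v - y u) * (x w - x u))%Z.

Lemma orient_Zpoint x y u v w :
  orient (Zpoint x y u) (Zpoint x y v) (Zpoint x y w) = IZR (orientZ x y u v w).
Proof. unfold orient, Zpoint, orientZ; simpl; rewrite !minus_IZR, !mult_IZR, !minus_IZR; ring. Qed.

Definition forall_below (n : nat) (P : nat -> bool) : bool := forallb P (seq 0 n).

Lemma forall_belowP n P : forall_below n P = true -> forall u, (u < n)%nat -> P u = true.
Proof. intros H u Hu; apply (proj1 (forallb_forall P _) H), in_seq; lia. Qed.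

Definition injectivity_check (n : nat) (x y : nat -> Z) : bool :=
  forall_below n (fun u => forall_below n (fun v =>
    (u =? v)%nat || negb ((x u =? x v)%Z && (y u =? y v)%Z))).

Definition general_position_check (n : nat) (x y : nat -> Z) : bool :=
  forall_below n (fun u => forall_below n (fun v => forall_below n (fun w =>
    (u =? v)%nat || (u =? w)%nat || (v =? w)%nat || negb (orientZ x y u v w =? 0)%Z))).

Definition layer_check (n k : nat) (adjb : nat -> nat -> bool) (layer : nat -> nat -> nat)
    : bool :=
  forall_below n (fun u => forall_below n (fun v =>
    negb (adjb u v) || ((layer u v <? k)%nat && (layer u v =? layer v u)%nat))).

Definition separation_check (n : nat) (adjb : nat -> nat -> bool) (x y : nat -> Z)
    (layer : nat -> nat -> nat) : bool :=
  forall_below n (fun u => forall_below n (fun v =>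
  forall_below n (fun a => forall_below n (fun b =>
    negb (adjb u v && adjb a b && (layer u v =? layer a b)%nat) ||
    (u =? a)%nat || (u =? b)%nat || (v =? a)%nat || (v =? b)%nat ||
    (0 <? orientZ x y u v a * orientZ x y u v b)%Z ||
    (0 <? orientZ x y a b u * orientZ x y a b v)%Z)))).

Lemma injectivity_checkP n x y : injectivity_check n x y = true ->
  forall u v, (u < n)%nat -> (v < n)%nat -> Zpoint x y u = Zpoint x y v -> u = v.
Proof.
  intros C u v Hu Hv E; pose proof (forall_belowP _ _ (forall_belowP _ _ C u Hu) v Hv) as Cuv.
  destruct (Nat.eqb_spec u v) as [|Nuv]; [assumption|]; exfalso.
  unfold Zpoint in E; injection E as Ex Ey; apply eq_IZR in Ex, Ey.
  apply Nat.eqb_neq in Nuv; rewrite Ex, Ey, Nuv, !Z.eqb_refl in Cuv; discriminate.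
Qed.

Lemma general_position_checkP n x y : general_position_check n x y = true ->
  forall u v w, (u < n)%nat -> (v < n)%nat -> (w < n)%nat -> u <> v -> u <> w -> v <> w ->
  orient (Zpoint x y u) (Zpoint x y v) (Zpoint x y w) <> 0.
Proof.
  intros C u v w Hu Hv Hw Nuv Nuw Nvw E; rewrite orient_Zpoint in E; apply eq_IZR in E.
  pose proof (forall_belowP _ _ (forall_belowP _ _ (forall_belowP _ _ C u Hu) v Hv) w Hw) as Cuvw.
  apply Nat.eqb_neq in Nuv, Nuw, Nvw; rewrite Nuv, Nuw, Nvw, E in Cuvw; discriminate.
Qed.

Lemma layer_checkP n k adjb layer : layer_check n k adjb layer = true ->
  forall u v, (u < n)%nat -> (v < n)%nat -> adjb u v = true ->
  (layer u v < k)%nat /\ layer u v = layer v u.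
Proof.
  intros C u v Hu Hv Adj; pose proof (forall_belowP _ _ (forall_belowP _ _ C u Hu) v Hv) as Cuv.
  cbv beta in Cuv; rewrite Adj in Cuv; simpl in Cuv; apply andb_true_iff in Cuv as [Lk Lsym].
  split; [apply Nat.ltb_lt | apply Nat.eqb_eq]; assumption.
Qed.

Lemma separation_checkP n adjb x y layer : separation_check n adjb x y layer = true ->
  forall u v a b, (u < n)%nat -> (v < n)%nat -> (a < n)%nat -> (b < n)%nat ->
  adjb u v = true -> adjb a b = true -> u <> a -> u <> b -> v <> a -> v <> b ->
  layer u v = layer a b ->
  0 < orient (Zpoint x y u) (Zpoint x y v) (Zpoint x y a) *
      orient (Zpoint x y u) (Zpoint x y v) (Zpoint x y b) \/
  0 < orient (Zpoint x y a) (Zpoint x y b) (Zpoint x y u) *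
      orient (Zpoint x y a) (Zpoint x y b) (Zpoint x y v).
Proof.
  intros C u v a b Hu Hv Ha Hb Auv Aab Nua Nub Nva Nvb L.
  pose proof (forall_belowP _ _ (forall_belowP _ _ (forall_belowP _ _
    (forall_belowP _ _ C u Hu) v Hv) a Ha) b Hb) as Cuvab; cbv beta in Cuvab.
  apply Nat.eqb_neq in Nua, Nub, Nva, Nvb.
  rewrite Auv, Aab, L, Nat.eqb_refl, Nua, Nub, Nva, Nvb in Cuvab; simpl in Cuvab.
  rewrite !orient_Zpoint, <- !mult_IZR.
  apply orb_true_iff in Cuvab as [S|S]; apply Z.ltb_lt, IZR_lt in S; auto.
Qed.

Definition drawing_certificate (n k : nat) (adjb : nat -> nat -> bool) (x y : nat -> Z)
    (layer : nat -> nat -> nat) : bool :=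
  injectivity_check n x y && general_position_check n x y &&
  layer_check n k adjb layer && separation_check n adjb x y layer.

Lemma geom_layerable_of_certificate (G : graph) (k : nat) (adjb : nat -> nat -> bool)
    (x y : nat -> Z) (layer : nat -> nat -> nat) :
  (forall u v, adj G u v -> adjb u v = true) ->
  drawing_certificate (nverts G) k adjb x y layer = true -> geom_k_layerable G k.
Proof.
  intros Adj C; unfold drawing_certificate in C; rewrite !andb_true_iff in C.
  destruct C as [[[Inj Gen] Lay] Sep].
  apply geom_layerable_of_separation with (Zpoint x y) layer.
  - exact (injectivity_checkP _ _ _ Inj).
  - exact (general_position_checkP _ _ _ Gen).
  - intros u v E; destruct (adj_range G u v E); apply (layer_checkP _ _ _ _ Lay); auto.
  - intros u v a b E E'; destruct (adj_range G u v E), (adj_range G a b E').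
    apply (separation_checkP _ _ _ _ _ Sep); auto.
Qed.

Lemma Kbip_adj_sides m n u v : Kbip_adj m n u v -> xorb (u <? m)%nat (v <? m)%nat = true.
Proof.
  intros [[Hu Hv]|[Hv Hu]].
  - rewrite (proj2 (Nat.ltb_lt u m) Hu), (proj2 (Nat.ltb_ge v m)); [reflexivity | lia].
  - rewrite (proj2 (Nat.ltb_lt v m) Hv), (proj2 (Nat.ltb_ge u m)); [reflexivity | lia].
Qed.

Definition K66_x (v : nat) : Z :=
  nth v [54; 367; 501; 374; 56; 89; 200; 0; 247; 18; 781; 326]%Z 0%Z.
Definition K66_y (v : nat) : Z :=
  nth v [309; 736; 772; 640; 231; 348; 446; 987; 511; 918; 425; 615]%Z 0%Z.

Definition K66_layers : list (list nat) :=
  [[0; 1; 0; 0; 1; 0];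
   [1; 0; 1; 1; 0; 1];
   [1; 1; 1; 1; 0; 1];
   [1; 0; 1; 0; 0; 0];
   [0; 0; 0; 0; 0; 0];
   [1; 1; 0; 1; 1; 0]]%nat.

Definition K66_layer (u v : nat) : nat :=
  if (u <? 6)%nat then nth (v - 6) (nth u K66_layers []) 0%nat
  else nth (u - 6) (nth v K66_layers []) 0%nat.

Lemma K66_two_layers : geom_k_layerable (K_bip 6 6) 2.
Proof.
  apply geom_layerable_of_certificate
    with (fun u v => xorb (u <? 6)%nat (v <? 6)%nat) K66_x K66_y K66_layer.
  - apply Kbip_adj_sides.
  - vm_compute; reflexivity.
Qed.

(** * Plane drawings of complete bipartite graphs *)

Lemma NoDup_three {T} (l : list T) : NoDup l -> (3 <= length l)%nat ->
  exists x y z, In x l /\ In y l /\ In z l /\ x <> y /\ x <> z /\ y <> z.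
Proof.
  intros Nd Len; destruct l as [|x [|y [|z r]]]; simpl in Len; try lia.
  apply NoDup_cons_iff in Nd as [Nx Nd]; apply NoDup_cons_iff in Nd as [Ny _].
  exists x, y, z; simpl in *; repeat split; auto; intros ->; tauto.
Qed.

Lemma three_same_sign {T} (f : T -> R) (l : list T) : NoDup l -> (6 <= length l)%nat ->
  (forall x y, In x l -> In y l -> x <> y -> f x = 0 -> f y = 0 -> False) ->
  exists x y z, In x l /\ In y l /\ In z l /\ x <> y /\ x <> z /\ y <> z /\
    (0 < f x /\ 0 < f y /\ 0 < f z \/ f x < 0 /\ f y < 0 /\ f z < 0).
Proof.
  intros Nd Len Zero.
  set (pos x := if Rlt_dec 0 (f x) then true else false).
  set (neg x := if Rlt_dec (f x) 0 then true else false).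
  assert (Pos : forall x, pos x = true -> 0 < f x)
    by (intros x; unfold pos; destruct Rlt_dec; easy).
  assert (Neg : forall x, neg x = true -> f x < 0)
    by (intros x; unfold neg; destruct Rlt_dec; easy).
  pose proof (filter_length pos l) as Split1.
  set (nonpos := filter (fun x => negb (pos x)) l) in Split1.
  pose proof (filter_length neg nonpos) as Split2.
  assert (Zeros : (length (filter (fun x => negb (neg x)) nonpos) <= 1)%nat).
  { remember (filter (fun x => negb (neg x)) nonpos) as zeros eqn:Ez.
    assert (Nd0 : NoDup zeros) by (rewrite Ez; do 2 apply NoDup_filter; exact Nd).
    assert (In0 : forall x, In x zeros -> In x l /\ f x = 0).
    { intros x Hx; rewrite Ez in Hx; unfold nonpos in Hx; rewrite !filter_In in Hx.
      unfold pos, neg in Hx; destruct Hx as [[Hx P] N].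
      destruct (Rlt_dec 0 (f x)), (Rlt_dec (f x) 0); simpl in *; try discriminate.
      split; [assumption|lra]. }
    destruct zeros as [|x [|y r]]; simpl; try lia; exfalso.
    apply NoDup_cons_iff in Nd0 as [Nx _].
    destruct (In0 x) as [Ix Fx]; [simpl; auto|]; destruct (In0 y) as [Iy Fy]; [simpl; auto|].
    apply (Zero x y Ix Iy); auto; intros ->; simpl in Nx; tauto. }
  destruct (le_lt_dec 3 (length (filter pos l))) as [P|P].
  - destruct (NoDup_three _ (NoDup_filter pos Nd) P) as [x [y [z [Ix [Iy [Iz D]]]]]].
    rewrite !filter_In in Ix, Iy, Iz.
    exists x, y, z; intuition.
  - assert (N : (3 <= length (filter neg nonpos))%nat) by lia.
    destruct (NoDup_three _ (NoDup_filter neg (NoDup_filter _ Nd)) N)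
      as [x [y [z [Ix [Iy [Iz D]]]]]].
    unfold nonpos in Ix, Iy, Iz; rewrite !filter_In in Ix, Iy, Iz.
    exists x, y, z; intuition.
Qed.

Section PlaneBipartiteDrawing.

Variables A B : point -> Prop.

Hypothesis edges_disjoint : forall a a' b b' z, A a -> A a' -> B b -> B b' ->
  a <> a' -> b <> b' -> on_seg z a b -> on_seg z a' b' -> False.
Hypothesis B_off_edges : forall a b b', A a -> B b -> B b' -> b <> b' -> ~ on_seg b' a b.
Hypothesis A_off_edges : forall a a' b, A a -> A a' -> B b -> a <> a' -> ~ on_seg a' a b.

Lemma same_side_not_collinear a a' b b' : A a -> B b -> B b' -> b <> b' ->
  0 < orient a a' b * orient a a' b' -> orient a b b' <> 0.
Proof.
  intros Ha Hb Hb' Nbb' Side E.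
  assert (Nab : a <> b) by (intros ->; unfold orient at 1 in Side; nra).
  destruct (collinear_between a b b' Nab E) as [H|[H|H]].
  - exact (B_off_edges a b b' Ha Hb Hb' Nbb' H).
  - exact (same_side_segments_disjoint a a' b b' a Side (on_seg_left a a') (on_seg_sym _ _ _ H)).
  - exact (B_off_edges a b' b Ha Hb' Hb (not_eq_sym Nbb') H).
Qed.

Lemma angular_orders_opposite a1 a2 b b' : A a1 -> A a2 -> B b -> B b' -> b <> b' ->
  0 < orient a1 a2 b -> 0 < orient a1 a2 b' ->
  0 < orient a1 b b' /\ orient a2 b b' < 0 \/ orient a1 b b' < 0 /\ 0 < orient a2 b b'.
Proof.
  intros Ha1 Ha2 Hb Hb' Nbb' S S'.
  assert (N1 : orient a1 b b' <> 0)
    by (apply (same_side_not_collinear a1 a2); auto; nra).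
  assert (N2 : orient a2 b b' <> 0).
  { apply (same_side_not_collinear a2 a1); auto.
    rewrite (orient_swap12 a2 a1 b), (orient_swap12 a2 a1 b'); nra. }
  destruct (orient_distinct a1 a2 b) as [Na _]; [lra|].
  pose proof (orient_swap23 a1 a2 b); pose proof (orient_swap23 a1 a2 b').
  pose proof (orient_swap23 a1 b b'); pose proof (orient_swap23 a2 b b').
  pose proof (orient_cycle a1 a2 b); pose proof (orient_cycle a1 a2 b').
  destruct (Rlt_or_le 0 (orient a1 b b')), (Rlt_or_le 0 (orient a2 b b')); try (left; lra);
    try (right; lra); exfalso.
  - destruct (segments_cross a1 b a2 b') as [z [Z1 Z2]]; [nra|nra|].
    exact (edges_disjoint a1 a2 b b' z Ha1 Ha2 Hb Hb' Na Nbb' Z1 Z2).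
  - destruct (segments_cross a1 b' a2 b) as [z [Z1 Z2]]; [nra|nra|].
    exact (edges_disjoint a1 a2 b' b z Ha1 Ha2 Hb' Hb Na (not_eq_sym Nbb') Z1 Z2).
Qed.

(* b1, b2, b3 lie on one side of the line a1 a2, and b2 lies between b1 and b3 in the
   (opposite) angular orders around a1 and around a2. *)
Section ThirdVertex.

Variables a1 a2 a3 b1 b2 b3 : point.
Hypotheses (Ha1 : A a1) (Ha2 : A a2) (Ha3 : A a3) (Hb1 : B b1) (Hb2 : B b2) (Hb3 : B b3).
Hypotheses (N31 : a3 <> a1) (N32 : a3 <> a2).
Hypotheses (S1 : 0 < orient a1 a2 b1) (S2 : 0 < orient a1 a2 b2) (S3 : 0 < orient a1 a2 b3).
Hypotheses (O12 : 0 < orient a1 b1 b2) (O12' : orient a2 b1 b2 < 0).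
Hypotheses (O23 : 0 < orient a1 b2 b3) (O23' : orient a2 b2 b3 < 0).

Lemma third_vertex_far_side : orient a1 a2 a3 < 0 -> False.
Proof.
  intros Far.
  (* The edge a3 b2 meets the line a1 a2 at w. If w is on the segment a1 a2, the edge enters
     the triangle a1 a2 b1, which does not contain b2; otherwise it leaves the triangle a1 a2 b3,
     which contains b2. *)
  destruct (orient_distinct a1 b1 b2) as [_ [N12 _]]; [lra|].
  destruct (orient_distinct a1 b2 b3) as [_ [N23 _]]; [lra|].
  destruct (orient_distinct a1 a2 b1) as [N_a _]; [lra|].
  destruct (affine_root (- orient a1 a2 a3) (- orient a1 a2 b2)) as [t [Ht Et]]; [lra|lra|].
  set (w := lerp a3 b2 t).
  assert (Hw : on_seg w a3 b2) by (apply on_seg_lerp, Ht).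
  assert (Lw : orient a1 a2 w = 0) by (unfold w; rewrite orient_lerp; lra).
  destruct (collinear_lerp a1 a2 w N_a Lw) as [s Es].
  assert (Base : forall b, orient a2 b w = (1 - s) * orient a1 a2 b /\
                           orient b a1 w = s * orient a1 a2 b)
    by (intros b; rewrite Es; unfold orient, lerp; simpl; split; ring).
  destruct (Base b1) as [W1 W1']; destruct (Base b3) as [W3 W3'].
  assert (Cases : 0 <= s <= 1 \/ s < 0 \/ 1 < s)
    by (destruct (Rle_or_lt 0 s); destruct (Rle_or_lt s 1); lra).
  destruct Cases as [Ins|Out].
  - destruct (triangle_exit a1 a2 b1 w b2) as [z [Z1 Z2]]; auto.
    + unfold in_triangle; rewrite Lw, W1, W1'; repeat split; nra.
    + lra.
    + assert (Hz : on_seg z a3 b2) by (apply on_seg_trans with w; auto).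
      destruct Z2 as [Z2|Z2].
      * exact (edges_disjoint a3 a2 b2 b1 z Ha3 Ha2 Hb2 Hb1 N32 (not_eq_sym N12) Hz Z2).
      * exact (edges_disjoint a3 a1 b2 b1 z Ha3 Ha1 Hb2 Hb1 N31 (not_eq_sym N12) Hz
                 (on_seg_sym _ _ _ Z2)).
  - destruct (triangle_exit a1 a2 b3 b2 w) as [z [Z1 Z2]]; auto.
    + unfold in_triangle; rewrite (orient_swap23 a2 b3), (orient_cycle b3 a1 b2).
      repeat split; lra.
    + lra.
    + destruct Out; [right | left]; nra.
    + assert (Hz : on_seg z a3 b2) by (apply on_seg_trans with w; auto; apply on_seg_sym; auto).
      destruct Z2 as [Z2|Z2].
      * exact (edges_disjoint a3 a2 b2 b3 z Ha3 Ha2 Hb2 Hb3 N32 N23 Hz Z2).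
      * exact (edges_disjoint a3 a1 b2 b3 z Ha3 Ha1 Hb2 Hb3 N31 N23 Hz (on_seg_sym _ _ _ Z2)).
Qed.

Lemma third_vertex_near_side : 0 <= orient a1 a2 a3 -> False.
Proof.
  intros Near.
  (* Either a3 lies in the triangle a1 a2 b2, which the edge a3 b3 must leave, or the edge
     b1 a3 must leave that triangle, which contains b1. *)
  destruct (orient_distinct a1 b1 b2) as [_ [N12 _]]; [lra|].
  destruct (orient_distinct a1 b2 b3) as [_ [N23 _]]; [lra|].
  assert (Where : in_triangle a1 a2 b2 a3 \/ orient a2 b2 a3 < 0 \/ orient b2 a1 a3 < 0).
  { destruct (Rle_or_lt 0 (orient a2 b2 a3)), (Rle_or_lt 0 (orient b2 a1 a3)); auto.
    left; repeat split; auto. }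
  destruct Where as [Inside|Outside].
  - destruct (triangle_exit a1 a2 b2 a3 b3) as [z [Z1 [Z2|Z2]]]; auto; [lra| |].
    + exact (edges_disjoint a3 a2 b3 b2 z Ha3 Ha2 Hb3 Hb2 N32 (not_eq_sym N23) Z1 Z2).
    + exact (edges_disjoint a3 a1 b3 b2 z Ha3 Ha1 Hb3 Hb2 N31 (not_eq_sym N23) Z1
               (on_seg_sym _ _ _ Z2)).
  - destruct (triangle_exit a1 a2 b2 b1 a3) as [z [Z1 [Z2|Z2]]]; auto.
    + unfold in_triangle; rewrite (orient_swap23 a2 b2 b1), (orient_cycle b2 a1 b1).
      repeat split; lra.
    + exact (edges_disjoint a3 a2 b1 b2 z Ha3 Ha2 Hb1 Hb2 N32 N12 (on_seg_sym _ _ _ Z1) Z2).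
    + exact (edges_disjoint a3 a1 b1 b2 z Ha3 Ha1 Hb1 Hb2 N31 N12 (on_seg_sym _ _ _ Z1)
               (on_seg_sym _ _ _ Z2)).
Qed.

Lemma no_plane_ordered_K33 : False.
Proof.
  destruct (Rlt_or_le (orient a1 a2 a3) 0).
  - apply third_vertex_far_side; assumption.
  - apply third_vertex_near_side; assumption.
Qed.

End ThirdVertex.

Lemma no_plane_same_side_K33 a1 a2 a3 b1 b2 b3 : A a1 -> A a2 -> A a3 -> B b1 -> B b2 -> B b3 ->
  a3 <> a1 -> a3 <> a2 -> b1 <> b2 -> b1 <> b3 -> b2 <> b3 ->
  0 < orient a1 a2 b1 -> 0 < orient a1 a2 b2 -> 0 < orient a1 a2 b3 -> False.
Proof.
  intros Ha1 Ha2 Ha3 Hb1 Hb2 Hb3 N31 N32 N12 N13 N23 S1 S2 S3.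
  destruct (angular_orders_opposite a1 a2 b1 b2), (angular_orders_opposite a1 a2 b2 b3),
    (angular_orders_opposite a1 a2 b1 b3); auto;
  pose proof (orient_swap23 a1 b1 b2); pose proof (orient_swap23 a2 b1 b2);
  pose proof (orient_swap23 a1 b2 b3); pose proof (orient_swap23 a2 b2 b3);
  pose proof (orient_swap23 a1 b1 b3); pose proof (orient_swap23 a2 b1 b3);
  first
    [ solve [apply (no_plane_ordered_K33 a1 a2 a3 b1 b2 b3); auto; lra]
    | solve [apply (no_plane_ordered_K33 a1 a2 a3 b1 b3 b2); auto; lra]
    | solve [apply (no_plane_ordered_K33 a1 a2 a3 b2 b1 b3); auto; lra]
    | solve [apply (no_plane_ordered_K33 a1 a2 a3 b2 b3 b1); auto; lra]
    | solve [apply (no_plane_ordered_K33 a1 a2 a3 b3 b1 b2); auto; lra]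
    | solve [apply (no_plane_ordered_K33 a1 a2 a3 b3 b2 b1); auto; lra] ].
Qed.

Lemma collinear_on_edge a1 a2 b : A a1 -> A a2 -> B b -> a1 <> a2 ->
  orient a1 a2 b = 0 -> on_seg b a1 a2.
Proof.
  intros Ha1 Ha2 Hb N12 E.
  destruct (collinear_between a1 a2 b N12 E) as [H|[H|H]]; [exact H| |]; exfalso.
  - exact (A_off_edges a2 a1 b Ha2 Ha1 Hb (not_eq_sym N12) (on_seg_sym _ _ _ H)).
  - exact (A_off_edges a1 a2 b Ha1 Ha2 Hb N12 H).
Qed.

Lemma at_most_one_collinear a1 a2 b b' : A a1 -> A a2 -> B b -> B b' -> a1 <> a2 -> b <> b' ->
  orient a1 a2 b = 0 -> orient a1 a2 b' = 0 -> False.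
Proof.
  intros Ha1 Ha2 Hb Hb' N12 Nbb' E E'.
  destruct (on_segP _ _ _ (collinear_on_edge a1 a2 b Ha1 Ha2 Hb N12 E)) as [t [Ht ->]].
  destruct (on_segP _ _ _ (collinear_on_edge a1 a2 b' Ha1 Ha2 Hb' N12 E')) as [t' [Ht' ->]].
  destruct (Rle_or_lt t t').
  - exact (B_off_edges a1 _ _ Ha1 Hb' Hb (not_eq_sym Nbb') (on_seg_lerp_le a1 a2 t t' ltac:(lra))).
  - exact (B_off_edges a1 _ _ Ha1 Hb Hb' Nbb' (on_seg_lerp_le a1 a2 t' t ltac:(lra))).
Qed.

Lemma no_plane_K36 a1 a2 a3 bs : A a1 -> A a2 -> A a3 -> a1 <> a2 -> a1 <> a3 -> a2 <> a3 ->
  NoDup bs -> (6 <= length bs)%nat -> Forall B bs -> False.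
Proof.
  intros Ha1 Ha2 Ha3 N12 N13 N23 Nd Len HB; rewrite Forall_forall in HB.
  destruct (three_same_sign (orient a1 a2) bs Nd Len)
    as [x [y [z [Ix [Iy [Iz [Nxy [Nxz [Nyz Sides]]]]]]]]].
  { intros b b' Ib Ib'; apply at_most_one_collinear; auto. }
  destruct Sides as [[Sx [Sy Sz]]|[Sx [Sy Sz]]].
  - apply (no_plane_same_side_K33 a1 a2 a3 x y z); auto.
  - apply (no_plane_same_side_K33 a2 a1 a3 x y z); auto; rewrite orient_swap12; lra.
Qed.

End PlaneBipartiteDrawing.

Lemma K_bip_not_one_layer m n : (3 <= m)%nat -> (6 <= n)%nat -> ~ geom_k_layerable (K_bip m n) 1.
Proof.
  intros Hm Hn [pos [layer [Inj [NoVert [Layers Cross]]]]]; simpl in *.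
  assert (Edge : forall i j, (i < m)%nat -> (m <= j < m + n)%nat -> Kbip_adj m n i j)
    by (intros; left; lia).
  apply (no_plane_K36 (fun p => exists i, (i < m)%nat /\ p = pos i)
                    (fun p => exists j, (m <= j < m + n)%nat /\ p = pos j))
    with (pos 0%nat) (pos 1%nat) (pos 2%nat) (map pos (seq m 6)).
  - intros a a' b b' z [i [Hi ->]] [i' [Hi' ->]] [j [Hj ->]] [j' [Hj' ->]] Na Nb Z Z'.
    destruct (Layers i j (Edge i j Hi Hj)), (Layers i' j' (Edge i' j' Hi' Hj')).
    destruct (Cross i j i' j' (Edge i j Hi Hj) (Edge i' j' Hi' Hj')) with (p := z)
      as [w [[-> | ->] [[E | E] _]]]; auto; try lia; try congruence.
    unfold same_edge; intros [[-> ->]|[-> ->]]; [congruence | lia].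
  - intros a b b' [i [Hi ->]] [j [Hj ->]] [j' [Hj' ->]] Nb.
    apply NoVert; [auto | lia | lia | congruence].
  - intros a a' b [i [Hi ->]] [i' [Hi' ->]] [j [Hj ->]] Na.
    apply NoVert; [auto | lia | congruence | lia].
  - exists 0%nat; split; [lia | reflexivity].
  - exists 1%nat; split; [lia | reflexivity].
  - exists 2%nat; split; [lia | reflexivity].
  - intros E; apply Inj in E; lia.
  - intros E; apply Inj in E; lia.
  - intros E; apply Inj in E; lia.
  - apply Injective_map_NoDup_in; [|apply seq_NoDup].
    intros x y Ix Iy; apply in_seq in Ix, Iy; apply Inj; lia.
  - rewrite length_map, length_seq; lia.
  - apply Forall_forall; intros b Ib; apply in_map_iff in Ib as [j [<- Ij]].
    apply in_seq in Ij; exists j; split; [lia | reflexivity].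
Qed.

Lemma no_zero_layers (G : graph) u v : adj G u v -> ~ geom_k_layerable G 0.
Proof. intros E [pos [layer [_ [_ [Layers _]]]]]; destruct (Layers u v E); lia. Qed.

Theorem mainTheorem9 : geometric_thickness_is (K_bip 6 6) 2.
Proof.
  split; [exact K66_two_layers |].
  intros k Hk; destruct k as [|[|k]]; [exfalso | exfalso | lia].
  - apply (no_zero_layers (K_bip 6 6) 0 6); [left; lia | exact Hk].
  - exact (K_bip_not_one_layer 6 6 ltac:(lia) ltac:(lia) Hk).
Qed.
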